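(* Let $G$ be a trigraph containing two disjoint vertical sets $V^j=\{x^j,y^j\}\cup V(F^j)$ and $V^{j'}=\{x^{j'},y^{j'}\}\cup V(F^{j'})$ with an arc from $V^j$ to $V^{j'}$, where both fence gadgets $F^j$ and $F^{j'}$ satisfy the attachment rule in $G$. Then in any partial $4$-sequence from $G$, any contraction involving two vertices of $V^{j'}$ is preceded by (or is itself) the contraction that puts $x^j$ and $y^j$ into the same part.
   Context: A trigraph $G$ consists of a vertex set $V(G)$ and two disjoint sets of unordered pairs of distinct vertices: black edges and red edges; the red graph is formed by the red edges. Contracting two distinct vertices $u,v$ replaces them by a new vertex $w$ such that, for every other vertex $z$, $wz$ is black if $uz,vz$ are both black, a non-edge if both are non-edges, and red otherwise. A partial $d$-sequence from $G$ is a sequence of trigraphs starting at $G$, each obtained from the previous by one contraction, all of maximum red degree at most $d$. Each vertex $u$ of a later trigraph corresponds to the set $u(G)$ (its part) of vertices of $G$ merged into it; a contraction of $u,u'$ involves two vertices $v,v'$ of $G$ if $v\in u(G),v'\in u'(G)$ or vice versa. A fence gadget is a trigraph $F$ on $A\cup B$, $A=\{a_1,\dots,a_6\}$, $B=\{b_1,\dots,b_6\}$, whose black edges are those of the cycles $a_1a_2a_3a_4a_5a_6a_1$ and $b_1b_2b_3b_4b_5b_6b_1$ together with $b_1a_6$, and whose red edges are $a_ib_i$ for $i\in[6]$ and $a_ib_{i+1}$ for $i\in[5]$. Inside a trigraph $G$, $F$ is attached to a nonempty set $S\subseteq V(G)\setminus V(F)$ if every vertex of $A$ is joined by a black edge to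 every vertex of $S$ and no vertex of $B$ is adjacent to a vertex of $S$. $F$ satisfies the attachment rule in $G$ if $V(F)$ is the vertex set of a connected component of the red graph of $G$ and there is a set $X\subseteq V(G)\setminus(V(F)\cup S)$ such that every vertex of $A$ has exactly $X\cup S$ as its set of neighbours outside $V(F)$, every vertex of $B$ has exactly $X$ as its set of neighbours outside $V(F)$ (all these edges black), and every vertex of $X$ is adjacent to every vertex of $S$. A vertical set is a set $\{x,y\}\cup V(F)$ where $F$ is a fence gadget attached to $\{x,y\}$; $\{x,y\}$ is its vertical pair. An arc from a vertical set $V^j$ to a vertical set $V^{j'}$ means that $x^{j'}$ is joined by black edges to every vertex of $V^j$ while $y^{j'}$ has no neighbour in $V^j$. *)

From mathcomp Require Import all_boot.
Set Implicit Arguments. Unset Strict Implicit. Unset Printing Implicit Defensive.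

Record trigraph (T : finType) := Trigraph {
  tver : {set T}; tblack : rel T; tred : rel T }.

Section Defs.
Variable T : finType.

Definition wf_trigraph (G : trigraph T) : Prop :=
  [/\ forall u v, tblack G u v -> [/\ u \in tver G, v \in tver G & u != v],
      forall u v, tred G u v -> [/\ u \in tver G, v \in tver G & u != v],
      forall u v, tblack G u v = tblack G v u,
      forall u v, tred G u v = tred G v u &
      forall u v, ~~ (tblack G u v && tred G u v)].

Definition adj (G : trigraph T) u v := tblack G u v || tred G u v.

Definition rdeg (G : trigraph T) u := #|[set v in tver G | tred G u v]|.
Definition maxrdeg_le (d : nat) (G : trigraph T) : Prop :=
  forall u, u \in tver G -> rdeg G u <= d.
End Defs.

(* Trigraphs of a contraction sequence from G: each vertex is identified with
   its part (a set of vertices of G). *)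
Section Contraction.
Variable T : finType.

Definition trig_lift (G : trigraph T) : trigraph {set T} :=
  Trigraph [set [set v] | v in tver G]
    (fun A B => [exists u, exists v, [&& A == [set u], B == [set v] & tblack G u v]])
    (fun A B => [exists u, exists v, [&& A == [set u], B == [set v] & tred G u v]]).

Definition contract (H : trigraph {set T}) (A B : {set T}) : trigraph {set T} :=
  let W := A :|: B in
  let V' := tver H :\ A :\ B in
  let nb Z := [&& Z \in V', tblack H A Z & tblack H B Z] in
  let nr Z := [&& Z \in V', adj H A Z || adj H B Z & ~~ (tblack H A Z && tblack H B Z)] in
  Trigraph (W |: V')
    (fun X Y => if X == W then nb Y else if Y == W then nb X
                else [&& X \in V', Y \in V' & tblack H X Y])
    (fun X Y => if X == W then nr Y else if Y == W then nr X
                else [&& X \in V', Y \in V' & tred H X Y]).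

Definition trig_after (G : trigraph T) (s : seq ({set T} * {set T})) (k : nat) :=
  foldl (fun H p => contract H p.1 p.2) (trig_lift G) (take k s).

Definition nthc (s : seq ({set T} * {set T})) i := nth (set0, set0) s i.

(* s is (the list of contracted pairs of) a partial d-sequence from G. *)
Definition partial_seq (d : nat) (G : trigraph T) (s : seq ({set T} * {set T})) : Prop :=
  (forall k, k < size s ->
     [/\ (nthc s k).1 \in tver (trig_after G s k),
         (nthc s k).2 \in tver (trig_after G s k) &
         (nthc s k).1 != (nthc s k).2]) /\
  (forall k, k <= size s -> maxrdeg_le d (trig_after G s k)).

Definition involves (p : {set T} * {set T}) (v v' : T) : bool :=
  ((v \in p.1) && (v' \in p.2)) || ((v \in p.2) && (v' \in p.1)).
End Contraction.

(* Fence gadgets. A vertex label (false, i) stands for a_(i+1), (true, i) for b_(i+1). *)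
Definition cyc6 (i j : 'I_6) : bool := ((i.+1 %% 6) == j) || ((j.+1 %% 6) == i).

Definition fence_black (p q : bool * 'I_6) : bool :=
  [|| [&& ~~ p.1, ~~ q.1 & cyc6 p.2 q.2],
      [&& p.1, q.1 & cyc6 p.2 q.2],
      [&& p.1, p.2 == 0 :> nat, ~~ q.1 & q.2 == 5 :> nat] |
      [&& ~~ p.1, p.2 == 5 :> nat, q.1 & q.2 == 0 :> nat]].

Definition fence_red (p q : bool * 'I_6) : bool :=
  [&& ~~ p.1, q.1 & (q.2 == p.2 :> nat) || (q.2 == p.2.+1 :> nat)] ||
  [&& p.1, ~~ q.1 & (p.2 == q.2 :> nat) || (p.2 == q.2.+1 :> nat)].

Unset Implicit Arguments.
Section Fence.
Variable T : finType.
Variable G : trigraph T.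

Definition VF (f : bool * 'I_6 -> T) : {set T} := [set f p | p in [set: bool * 'I_6]].
Definition FA (f : bool * 'I_6 -> T) : {set T} := [set f (false, i) | i in [set: 'I_6]].
Definition FB (f : bool * 'I_6 -> T) : {set T} := [set f (true, i) | i in [set: 'I_6]].

(* f embeds a fence gadget as an induced subtrigraph of G. *)
Definition is_fence (f : bool * 'I_6 -> T) : Prop :=
  [/\ injective f, forall p, f p \in tver G,
      forall p q, tblack G (f p) (f q) = fence_black p q &
      forall p q, tred G (f p) (f q) = fence_red p q].

Definition attached (f : bool * 'I_6 -> T) (S : {set T}) : Prop :=
  [/\ S != set0, S \subset tver G :\: VF f,
      forall a s, a \in FA f -> s \in S -> tblack G a s &
      forall b s, b \in FB f -> s \in S -> ~~ adj G b s].

Definition attachment_rule (f : bool * 'I_6 -> T) (S : {set T}) : Prop :=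
  (forall u v, u \in VF f -> (v \in VF f) = connect (tred G) u v) /\
  exists X : {set T},
    [/\ X \subset tver G :\: (VF f :|: S),
        forall a z, a \in FA f -> z \notin VF f ->
          tblack G a z = (z \in X :|: S) /\ ~~ tred G a z,
        forall b z, b \in FB f -> z \notin VF f ->
          tblack G b z = (z \in X) /\ ~~ tred G b z &
        forall z s, z \in X -> s \in S -> adj G z s].

Definition vset (x y : T) (f : bool * 'I_6 -> T) : {set T} := [set x; y] :|: VF f.

Definition vertical (x y : T) (f : bool * 'I_6 -> T) : Prop :=
  [/\ x != y, is_fence f & attached f [set x; y]].

Definition vs_arc (Vj : {set T}) (x' y' : T) : Prop :=
  (forall v, v \in Vj -> tblack G x' v) /\ (forall v, v \in Vj -> ~~ adj G y' v).
End Fence.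
Arguments VF {T}. Arguments FA {T}. Arguments FB {T}. Arguments is_fence {T}.
Arguments attached {T}. Arguments attachment_rule {T}. Arguments vset {T}.
Arguments vertical {T}. Arguments vs_arc {T}.

(* As long as no contraction has touched a vertical set V, its 14 vertices lie in
   pairwise distinct parts.  The first contraction touching V must then merge x and y:
   contracting any other pair of vertices of V gives the new vertex at least five red
   neighbours among the parts of V itself (a finite check on the labelled gadget).
   Now consider the first contraction touching V^j'.  If V^j was touched strictly
   earlier, its first touch merged x^j and y^j.  Otherwise that contraction merges
   x^j' and y^j' while the vertices of V^j are still in distinct parts; as x^j' is
   black to V^j and y^j' is nonadjacent to it, at least 12 of these parts become red
   neighbours of the new vertex. *)

From mathcomp Require Import all_boot.
Set Implicit Arguments. Unset Strict Implicit. Unset Printing Implicit Defensive.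

Section Quotient.
Variables (T : finType) (G : trigraph T).
Implicit Types (H : trigraph {set T}) (A B P Q U V W : {set T}) (s : seq ({set T} * {set T})).
Implicit Types (u v w : T).

(* Every trigraph of a contraction sequence from G is a quotient of G in this sense. *)
Record quotient_trigraph (H : trigraph {set T}) : Prop := QuotientTrigraph {
  part_cover : forall v, v \in tver G -> exists2 P, P \in tver H & v \in P;
  part_uniq : forall P Q v, P \in tver H -> Q \in tver H -> v \in P -> v \in Q -> P = Q;
  part_black : forall P Q p q, tblack H P Q -> p \in P -> q \in Q -> tblack G p q;
  part_adj : forall P Q p q, P \in tver H -> Q \in tver H -> P != Q ->
    p \in P -> q \in Q -> adj G p q -> adj H P Q }.

Lemma quotient_trig_lift : quotient_trigraph (trig_lift G).
Proof.
split.
- by move=> v vG; exists [set v]; [exact: imset_f | exact: set11].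
- by move=> P Q v /imsetP[a _ ->] /imsetP[b _ ->]; rewrite !inE => /eqP-> /eqP->.
- move=> P Q p q /existsP[a /existsP[b /and3P[/eqP-> /eqP-> ab]]].
  by rewrite !inE => /eqP-> /eqP->.
- move=> P Q p q /imsetP[a _ ->] /imsetP[b _ ->] _; rewrite !inE => /eqP-> /eqP->.
  by rewrite /adj /= => /orP[] ab; apply/orP; [left|right];
    apply/existsP; exists a; apply/existsP; exists b; rewrite !eqxx.
Qed.

Lemma in_contract H A B P :
  (P \in tver (contract H A B)) = (P == A :|: B) || (P \in tver H :\ A :\ B).
Proof. exact: in_setU1. Qed.

Lemma adj_contract H A B P Q :
  adj (contract H A B) P Q =
  if P == A :|: B then (Q \in tver H :\ A :\ B) && (adj H A Q || adj H B Q)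
  else if Q == A :|: B then (P \in tver H :\ A :\ B) && (adj H A P || adj H B P)
  else [&& P \in tver H :\ A :\ B, Q \in tver H :\ A :\ B & adj H P Q].
Proof.
rewrite {1}/adj /contract /=.
have [_|nPW] := eqVneq P (A :|: B); rewrite /adj.
  by move: (Q \in _) (tblack H A Q) (tblack H B Q) (tred H A Q) (tred H B Q) => [] [] [] [] [].
have [_|nQW] := eqVneq Q (A :|: B).
  by move: (P \in _) (tblack H A P) (tblack H B P) (tred H A P) (tred H B P) => [] [] [] [] [].
by move: (P \in _) (Q \in _) => [] [].
Qed.

Hypothesis wfG : wf_trigraph G.

Lemma adjC u v : adj G u v = adj G v u.
Proof. by case: wfG => _ _ bC rC _; rewrite /adj bC rC. Qed.

Lemma quotient_contract H A B :
  quotient_trigraph H -> A \in tver H -> B \in tver H -> A != B ->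
  quotient_trigraph (contract H A B).
Proof.
move=> [cover uniq black adjH] HA HB nAB.
have inV' P : (P \in tver H :\ A :\ B) = [&& P != B, P != A & P \in tver H].
  by rewrite !inE.
have notin_AB P p : P \in tver H :\ A :\ B -> p \in P -> (p \in A) = false /\ (p \in B) = false.
  rewrite inV' => /and3P[PB PA HP] pP; split; apply/negP => pAB.
    by move: PA; rewrite (uniq _ _ _ HP HA pP pAB) eqxx.
  by move: PB; rewrite (uniq _ _ _ HP HB pP pAB) eqxx.
split.
- move=> v vG; case: (boolP (v \in A :|: B)) => vW.
    by exists (A :|: B); rewrite ?in_contract ?eqxx.
  have [P HP vP] := cover v vG; exists P => //; rewrite in_contract inV' HP andbT.
  by apply/orP; right; apply/andP; split; apply: contraNneq vW => <-; rewrite inE vP ?orbT.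
- move=> P Q v; rewrite !in_contract.
  move=> /orP[/eqP->|VP] /orP[/eqP->|VQ] //.
  + by rewrite inE => /orP[] vAB /(notin_AB _ _ VQ)[vA vB]; rewrite ?vA ?vB in vAB.
  + by move=> /(notin_AB _ _ VP)[vA vB]; rewrite inE vA vB.
  + by move: VP VQ; rewrite !inV' => /and3P[_ _ HP] /and3P[_ _ HQ]; apply: uniq.
- move=> P Q p q; rewrite /contract /=.
  case: ifP => [/eqP-> /and3P[_ bA bB]|_].
    by rewrite inE => /orP[] pAB qQ; [apply: black bA pAB qQ | apply: black bB pAB qQ].
  case: ifP => [/eqP-> /and3P[_ bA bB] pP|_ /and3P[_ _]]; last exact: black.
  case: wfG => _ _ bC _ _.
  by rewrite inE => /orP[] qAB; rewrite bC; [apply: black bA qAB pP | apply: black bB qAB pP].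
- have adj_merged R r z : R \in tver H :\ A :\ B -> r \in A :|: B -> z \in R ->
      adj G r z -> adj H A R || adj H B R.
    move=> VR; have := VR; rewrite inV' => /and3P[RB RA HR].
    rewrite inE => /orP[] rAB zR rz.
      by rewrite (adjH A R r z) // eq_sym.
    by rewrite (adjH B R r z) ?orbT // eq_sym.
  move=> P Q p q; rewrite !in_contract adj_contract => CP CQ nPQ pP qQ pq.
  case: ifP CP pP nPQ => [/eqP-> _ pW nWQ|nPW /= VP pP nPQ].
    have VQ : Q \in tver H :\ A :\ B by move: CQ; rewrite eq_sym (negPf nWQ).
    by rewrite VQ (adj_merged Q p q).
  case: ifP CQ qQ => [/eqP-> _ qW|nQW /= VQ qQ].
    by rewrite VP (adj_merged P q p) // adjC.
  by rewrite VP VQ (adjH P Q p q) //; [move: VP | move: VQ]; rewrite inV' => /and3P[].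
Qed.

(* [w] becomes a red neighbour when the parts of [u] and [v] are contracted. *)
Definition mixed u v w :=
  (adj G u w || adj G v w) && ~~ (tblack G u w && tblack G v w).

Lemma mixedC u v w : mixed u v w = mixed v u w.
Proof. by rewrite /mixed orbC; congr (_ && ~~ _); apply: andbC. Qed.

Lemma red_contract_mixed H A B P u v w :
  quotient_trigraph H -> A \in tver H -> B \in tver H -> P \in tver H -> P != A -> P != B ->
  u \in A -> v \in B -> w \in P -> mixed u v w -> tred (contract H A B) (A :|: B) P.
Proof.
move=> [_ _ black adjH] HA HB HP PA PB uA vB wP /andP[uvw nblack].
rewrite /contract /= eqxx !inE PA PB HP /=; apply/andP; split.
  by case/orP: uvw => [uw|vw]; [rewrite (adjH A P u w) | rewrite (adjH B P v w) ?orbT];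
    rewrite // eq_sym.
by apply: contra nblack => /andP[bA bB]; rewrite (black _ _ _ _ bA uA wP) (black _ _ _ _ bB vB wP).
Qed.

Lemma trig_afterS s k : k < size s ->
  trig_after G s k.+1 = contract (trig_after G s k) (nthc s k).1 (nthc s k).2.
Proof. by move=> ks; rewrite /trig_after (take_nth (set0, set0) ks) -cats1 foldl_cat. Qed.

Lemma involvesC (p : {set T} * {set T}) u v : involves p u v = involves p v u.
Proof. by rewrite /involves orbC; congr (_ || _); apply: andbC. Qed.

Lemma involves_size s k u v : involves (nthc s k) u v -> k < size s.
Proof. by rewrite ltnNge; apply: contraL => ks; rewrite /nthc nth_default // /involves !inE. Qed.

Definition distinct_parts H (U : {set T}) :=
  forall P u v, P \in tver H -> u \in U -> v \in U -> u \in P -> v \in P -> u = v.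

Definition touches s (U : {set T}) k :=
  [exists u in U, exists v in U, involves (nthc s k) u v].

Lemma touchesP s U k :
  reflect (exists u v, [/\ u \in U, v \in U & involves (nthc s k) u v]) (touches s U k).
Proof.
apply: (iffP exists_inP) => [[u uU /exists_inP[v vU uv]]|[u [v [uU vU uv]]]].
  by exists u, v.
by exists u => //; apply/exists_inP; exists v.
Qed.

Lemma distinct_partsS H U V : V \subset U -> distinct_parts H U -> distinct_parts H V.
Proof. by move=> /subsetP VU dU P u v HP /VU uU /VU vU; apply: dU. Qed.

Lemma distinct_parts_lift U : distinct_parts (trig_lift G) U.
Proof. by move=> P u v /imsetP[a _ ->] _ _; rewrite !inE => /eqP-> /eqP->. Qed.

Lemma card_part_le1 H U P : distinct_parts H U -> P \in tver H -> #|U :&: P| <= 1.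
Proof.
move=> dU HP; apply/card_le1_eqP => u v; rewrite !inE => /andP[uU uP] /andP[vU vP].
exact: (dU P v u).
Qed.

Section Sequence.
Variables (d : nat) (s : seq ({set T} * {set T})).
Hypothesis ps : partial_seq d G s.

Lemma quotient_trig_after k : k <= size s -> quotient_trigraph (trig_after G s k).
Proof.
elim: k => [|k IH] ks; first by rewrite /trig_after take0; exact: quotient_trig_lift.
have [HA HB nAB] := ps.1 k ks.
by rewrite trig_afterS //; apply: quotient_contract => //; apply: IH (ltnW ks).
Qed.

Lemma distinct_parts_next U k : k < size s ->
  distinct_parts (trig_after G s k) U -> ~~ touches s U k ->
  distinct_parts (trig_after G s k.+1) U.
Proof.
move=> ks dU /touchesP noU; have [HA HB _] := ps.1 k ks.
rewrite trig_afterS // => P u v.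
rewrite in_contract => /orP[/eqP->|]; last by rewrite !inE => /and3P[_ _]; apply: dU.
move=> uU vU; rewrite !inE => /orP[] uP /orP[] vP; try exact: dU uU vU uP vP.
  by case: noU; exists u, v; rewrite /involves uP vP.
by case: noU; exists u, v; rewrite /involves uP vP orbT.
Qed.

Lemma distinct_or_first_touch U n : n <= size s ->
  distinct_parts (trig_after G s n) U \/
  exists k, [/\ k < n, touches s U k & distinct_parts (trig_after G s k) U].
Proof.
elim: n => [_|n IH ns]; first by left; rewrite /trig_after take0; apply: distinct_parts_lift.
case: (IH (ltnW ns)) => [dU|[k [kn tU dU]]]; last by right; exists k; rewrite ltnS ltnW.
have [tU|ntU] := boolP (touches s U n); first by right; exists n.
by left; apply: distinct_parts_next.
Qed.

Lemma first_touch U i : touches s U i ->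
  exists k, [/\ k <= i, touches s U k & distinct_parts (trig_after G s k) U].
Proof.
move=> tU; have /touchesP[u [v [_ _ /involves_size ks]]] := tU.
case: (distinct_or_first_touch U (ltnW ks)) => [dU|[k [ki tUk dU]]].
  by exists i.
by exists k; rewrite ltnW.
Qed.

Lemma involves_neq k u v : involves (nthc s k) u v -> u != v.
Proof.
move=> uv; have ks := involves_size uv; have [HA HB nAB] := ps.1 k ks.
have uniq := part_uniq (quotient_trig_after (ltnW ks)).
apply: contra_neq nAB => eq_uv; rewrite -{}eq_uv in uv.
by case/orP: uv => /andP[uA uB]; [|apply/esym]; apply: uniq uA uB.
Qed.

Lemma distinct_parts_contracted k U u v w :
  distinct_parts (trig_after G s k) U -> involves (nthc s k) u v ->
  u \in U -> v \in U -> w \in U -> w \in (nthc s k).1 :|: (nthc s k).2 -> (w == u) || (w == v).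
Proof.
move=> dU uv uU vU wU; have [HA HB _] := ps.1 k (involves_size uv).
rewrite inE; case/orP: uv => /andP[uP vP] /orP[] wP.
- by rewrite (dU _ w u HA) ?eqxx ?orbT.
- by rewrite (dU _ w v HB) ?eqxx ?orbT.
- by rewrite (dU _ w v HA) ?eqxx ?orbT.
- by rewrite (dU _ w u HB) ?eqxx ?orbT.
Qed.

Lemma card_mixed_le k u v W :
  involves (nthc s k) u v -> W \subset tver G :\: ((nthc s k).1 :|: (nthc s k).2) ->
  distinct_parts (trig_after G s k) W -> {in W, forall w, mixed u v w} -> #|W| <= d.
Proof.
move=> uv; wlog /andP[uA vB] : u v uv / (u \in (nthc s k).1) && (v \in (nthc s k).2).
  move=> hwlog; case/orP: (uv) => uv'; first exact: hwlog.
  move=> WG dW mx; apply: (hwlog v u) => //; first by rewrite involvesC.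
    by rewrite andbC.
  by move=> w /mx; rewrite mixedC.
move=> /subsetP WG dW mx; have ks := involves_size uv.
have [HA HB nAB] := ps.1 k ks.
have Hq := quotient_trig_after (ltnW ks); have cover := part_cover Hq.
have := ps.2 k.+1 ks ((nthc s k).1 :|: (nthc s k).2).
rewrite trig_afterS // in_contract eqxx => /(_ isT).
set H := trig_after G s k in HA HB dW Hq cover *.
set A := (nthc s k).1 in uA HA nAB WG *; set B := (nthc s k).2 in vB HB nAB WG *.
apply: leq_trans.
pose part w := odflt set0 [pick P in tver H | w \in P].
have partP w : w \in W -> part w \in tver H /\ w \in part w.
  move=> /WG; rewrite inE => /andP[_ wG]; rewrite /part; case: pickP => [P /andP[]//|none].
  by have [P HP wP] := cover w wG; move: (none P); rewrite HP wP.
rewrite -(card_in_imset (f := part)); last first.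
  move=> w1 w2 W1 W2 e; have [H1 p1] := partP _ W1; have [_ p2] := partP _ W2.
  by apply: (dW (part w1)) => //; rewrite e.
apply: subset_leq_card; apply/subsetP => _ /imsetP[w wW ->].
have [Hw wP] := partP w wW.
have /WG := wW; rewrite !inE negb_or => /andP[/andP[wA wB] _].
have PA : part w != A by apply: contraNneq wA => <-.
have PB : part w != B by apply: contraNneq wB => <-.
rewrite PA PB Hw orbT /=.
exact: (red_contract_mixed Hq HA HB Hw PA PB uA vB wP (mx w wW)).
Qed.
End Sequence.
End Quotient.

(* [inl p] labels the gadget vertex [f p], [inr false] and [inr true] label [x] and [y];
   [bxy] and [rxy] stand for the unknown black and red status of the pair [xy]. *)
Definition label := ((bool * 'I_6) + bool)%type.

Definition label_black (bxy : bool) (l l' : label) : bool :=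
  match l, l' with
  | inl p, inl q => fence_black p q
  | inl p, inr _ => ~~ p.1
  | inr _, inl q => ~~ q.1
  | inr b, inr b' => (b != b') && bxy
  end.

Definition label_red (rxy : bool) (l l' : label) : bool :=
  match l, l' with
  | inl p, inl q => fence_red p q
  | inr b, inr b' => (b != b') && rxy
  | _, _ => false
  end.

Definition label_mixed bxy rxy (l1 l2 w : label) :=
  ((label_black bxy l1 w || label_red rxy l1 w) || (label_black bxy l2 w || label_red rxy l2 w))
  && ~~ (label_black bxy l1 w && label_black bxy l2 w).

Definition pair_label (l : label) := if l is inr _ then true else false.

(* Unlike [ord_enum 6], this enumeration reduces under [vm_compute]. *)
Definition ords6 : seq 'I_6 :=
  [:: Ordinal (isT : 0 < 6); Ordinal (isT : 1 < 6); Ordinal (isT : 2 < 6);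
      Ordinal (isT : 3 < 6); Ordinal (isT : 4 < 6); Ordinal (isT : 5 < 6)].

Definition labels : seq label :=
  [seq inl (b, i) | b <- [:: false; true], i <- ords6] ++ [:: inr false; inr true].

Lemma mem_labels l : l \in labels.
Proof.
have ords6P (i : 'I_6) : i \in ords6 by case: i => [[|[|[|[|[|[|]]]]]]].
case: l => [[b i]|[]]; rewrite mem_cat ?mem_seq2 ?eqxx ?orbT //.
by apply/orP; left; apply/allpairsP; exists (b, i); rewrite /= ords6P; case: b.
Qed.

Lemma uniq_labels : uniq labels.
Proof. by []. Qed.

Lemma label_mixed_count bxy rxy :
  all (fun l1 => all (fun l2 => (l1 != l2) && ~~ (pair_label l1 && pair_label l2) ==>
    (4 < count (fun w => [&& w != l1, w != l2 & label_mixed bxy rxy l1 l2 w]) labels))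
    labels) labels.
Proof. by case: bxy; case: rxy; vm_compute. Qed.

Section VerticalSet.
Variables (T : finType) (G : trigraph T) (x y : T) (f : bool * 'I_6 -> T).
Hypotheses (wfG : wf_trigraph G) (vert : vertical G x y f).

Definition lab (l : label) : T := if l is inl p then f p else if l is inr true then y else x.

Lemma lab_pair_edges p b :
  tblack G (f p) (lab (inr b)) = ~~ p.1 /\ tred G (f p) (lab (inr b)) = false.
Proof.
have [_ _ [_ _ blackA nadjB]] := vert; have [_ _ _ _ nbr] := wfG.
have labS : lab (inr b) \in [set x; y] by case: b; rewrite !inE eqxx ?orbT.
case: p => [[] i] /=.
  have /nadjB/(_ labS) : f (true, i) \in FB f by apply: imset_f.
  by rewrite /adj negb_or => /andP[/negPf-> /negPf->].
have /blackA/(_ labS) fb : f (false, i) \in FA f by apply: imset_f.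
by split=> //; apply/negbTE; move: (nbr (f (false, i)) (lab (inr b))); rewrite fb.
Qed.

Lemma lab_black l l' : tblack G (lab l) (lab l') = label_black (tblack G x y) l l'.
Proof.
have [bE _ bC _ _] := wfG; have [_ [_ _ fb _] _] := vert.
have irr u : tblack G u u = false by apply/negP => /bE[_ _]; rewrite eqxx.
case: l l' => [p|b] [q|b'] /=; first exact: fb.
- by have [] := lab_pair_edges p b'.
- by rewrite bC; have [] := lab_pair_edges q b.
- by case: b b' => [] [] /=; rewrite ?irr // bC.
Qed.

Lemma lab_red l l' : tred G (lab l) (lab l') = label_red (tred G x y) l l'.
Proof.
have [_ rE _ rC _] := wfG; have [_ [_ _ _ fr] _] := vert.
have irr u : tred G u u = false by apply/negP => /rE[_ _]; rewrite eqxx.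
case: l l' => [p|b] [q|b'] /=; first exact: fr.
- by have [] := lab_pair_edges p b'.
- by rewrite rC; have [] := lab_pair_edges q b.
- by case: b b' => [] [] /=; rewrite ?irr // rC.
Qed.

Lemma lab_inj : injective lab.
Proof.
have [nxy [finj _ _ _] [_ Ssub _ _]] := vert.
have fxy p b : f p != lab (inr b).
  have /(subsetP Ssub) : lab (inr b) \in [set x; y] by case: b; rewrite !inE eqxx ?orbT.
  by rewrite inE => /andP[nF _]; apply: contraNneq nF => <-; rewrite imset_f ?inE.
case=> [p|b] [q|b'] /= e.
- by rewrite (finj _ _ e).
- by move: (fxy p b'); rewrite e eqxx.
- by move: (fxy q b); rewrite -e eqxx.
- by case: b b' e nxy => [] [] //= ->; rewrite eqxx.
Qed.

Lemma vset_lab : vset x y f = [set lab l | l : label].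
Proof.
apply/setP => v; rewrite /vset !inE; apply/idP/imsetP => [|[[p|[]] _ ->]].
- by case/orP=> [/orP[]/eqP->|/imsetP[p _ ->]]; [exists (inr false) | exists (inr true) | exists (inl p)].
- by rewrite /= imset_f ?orbT.
- by rewrite eqxx orbT.
- by rewrite eqxx.
Qed.

Lemma card_vset : #|vset x y f| = 14.
Proof. by rewrite vset_lab card_imset; [rewrite card_sum card_prod !card_bool card_ord | exact: lab_inj]. Qed.

Lemma vset_sub : vset x y f \subset tver G.
Proof.
have [_ [_ fG _ _] [_ Ssub _ _]] := vert.
apply/subsetP => v; rewrite /vset inE => /orP[/(subsetP Ssub)|/imsetP[p _ ->] //].
by rewrite inE => /andP[].
Qed.

Variable s : seq ({set T} * {set T}).
Hypothesis ps : partial_seq 4 G s.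

Lemma vertical_touch_pair k :
  touches s (vset x y f) k -> distinct_parts (trig_after G s k) (vset x y f) ->
  involves (nthc s k) x y.
Proof.
rewrite vset_lab => /touchesP[_ [_ [/imsetP[l1 _ ->] /imsetP[l2 _ ->] uv]]] dV.
have nl12 : l1 != l2 by apply: contra_neq (involves_neq wfG ps uv) => ->.
case pl: (pair_label l1 && pair_label l2).
  move: pl uv nl12; case: l1 l2 => [p|[]] [q|[]] //= _ uv _; by rewrite // involvesC.
pose good w := [&& w != l1, w != l2 & label_mixed (tblack G x y) (tred G x y) l1 l2 w].
have : 4 < count good labels.
  have := label_mixed_count (tblack G x y) (tred G x y).
  by move=> /allP/(_ l1 (mem_labels l1))/allP/(_ l2 (mem_labels l2)); rewrite nl12 pl => /implyP; apply.
set W := [set w in map lab (filter good labels)].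
have labV l : lab l \in [set lab l | l : label] by apply: imset_f.
have card_W : #|W| = count good labels.
  rewrite cardsE (card_uniqP _) ?size_map ?size_filter //.
  by rewrite (map_inj_uniq lab_inj) filter_uniq ?uniq_labels.
rewrite -card_W ltnNge => /negP[]; apply: (card_mixed_le wfG ps uv).
- apply/subsetP => w; rewrite inE => /mapP[l]; rewrite mem_filter => /andP[/and3P[n1 n2 _] _] ->.
  rewrite inE (subsetP vset_sub) ?andbT; last by rewrite vset_lab imset_f.
  apply/negP => /(distinct_parts_contracted ps dV uv (labV l1) (labV l2) (labV l)).
  by rewrite !(inj_eq lab_inj) (negPf n1) (negPf n2).
- apply: distinct_partsS dV; apply/subsetP => w; rewrite inE => /mapP[l _ ->].
  exact: imset_f.
- move=> w; rewrite inE => /mapP[l]; rewrite mem_filter => /andP[/and3P[_ _ mx] _] ->.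
  by rewrite /mixed /adj !lab_black !lab_red.
Qed.

Lemma arc_no_contraction x' y' k :
  vs_arc G (vset x y f) x' y' -> distinct_parts (trig_after G s k) (vset x y f) ->
  ~~ involves (nthc s k) x' y'.
Proof.
move=> [blackV nadjV] dV; apply/negP => xy'.
have [HA HB _] := ps.1 k (involves_size xy').
set V := vset x y f in blackV nadjV dV *; set AB := (nthc s k).1 :|: (nthc s k).2.
have le4 : #|V :\: AB| <= 4.
  apply: (card_mixed_le wfG ps xy'); first exact: setSD vset_sub.
    by apply: distinct_partsS dV; apply: subsetDl.
  move=> w /setDP[wV _]; move: (nadjV w wV).
  by rewrite /mixed /adj blackV // negb_or => /andP[/negPf->].
have le2 : #|V :&: AB| <= 2.
  rewrite setIUr; apply: leq_trans (leq_card_setU _ _) _.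
  by rewrite -[2]/(1 + 1) leq_add // (card_part_le1 dV).
by move: le4; rewrite cardsD card_vset => /(leq_trans (leq_sub2l 14 le2)).
Qed.
End VerticalSet.

Theorem lemma4p11 (T : finType) (G : trigraph T) (x y x' y' : T)
    (f f' : bool * 'I_6 -> T) :
  wf_trigraph G ->
  vertical G x y f -> vertical G x' y' f' ->
  [disjoint vset x y f & vset x' y' f'] ->
  vs_arc G (vset x y f) x' y' ->
  attachment_rule G f [set x; y] -> attachment_rule G f' [set x'; y'] ->
  forall s : seq ({set T} * {set T}), partial_seq 4 G s ->
  forall i, i < size s ->
  (exists v v', [/\ v \in vset x' y' f', v' \in vset x' y' f' & involves (nthc s i) v v']) ->
  exists2 k, k <= i & involves (nthc s k) x y.
Proof.
move=> wfG vert vert' _ arc _ _ s ps i _ /touchesP touch'.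
have [i0 [le_i0 touch0' dist0']] := first_touch ps touch'.
have /touchesP[_ [_ [_ _ /involves_size lt_i0]]] := touch0'.
have [dist0|[k [lt_k touch dist]]] := distinct_or_first_touch ps (vset x y f) (ltnW lt_i0).
  have pair0' := vertical_touch_pair wfG vert' ps touch0' dist0'.
  by move: (arc_no_contraction wfG vert ps arc dist0); rewrite pair0'.
exists k; first exact: leq_trans (ltnW lt_k) le_i0.
exact: (vertical_touch_pair wfG vert ps touch dist).
Qed.
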